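(* Let $f=l+r\colon\mathbb{R}^d\to\mathbb{R}\cup\{+\infty\}$ be $\rho$-weakly convex and let $\{f_x=l_x+r\}_{x\in\mathbb{R}^d}$ be a one-sided model family with $\tau=0$ and Lipschitz constant $L$. Let $0<\mu<\rho^{-1}$, fix $a,b>0$, $x_0\in\mathbb{R}^d$, $\theta_k=\frac{\mu^{-1}-\rho}{2}(k+1)$, and define for $k=0,1,\dots,K$ $$x_{k+1}=\operatorname{argmin}_{x\in\mathbb{R}^d}\Big\{f_{x_k}(x)+\frac{1+\theta_k\mu}{2\mu}\Big\|x-\frac{x_0+\theta_k\mu x_k}{1+\theta_k\mu}\Big\|^2\Big\},\qquad \bar x_K=\frac{2}{(K+2)(K+3)-2}\sum_{k=1}^{K+1}(k+1)x_k.$$ If $K\ge\frac4a+\frac{16L^2}{(1-\mu\rho)^2b^2}$, then $$\|\bar x_K-\mathrm{prox}_{\mu f}(x_0)\|\le a\|x_0-\mathrm{prox}_{\mu f}(x_0)\|+\mu b.$$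
   Context: One-sided model family: $f=l+r$ with $r\colon\mathbb{R}^d\to\mathbb{R}\cup\{+\infty\}$ closed and $l\colon\mathbb{R}^d\to\mathbb{R}$ locally Lipschitz; for each $x\in\mathbb{R}^d$ a function $l_x\colon\mathbb{R}^d\to\mathbb{R}$ is given which is $L$-Lipschitz on $\mathrm{dom}\,r$, satisfies $l_x(x)=l(x)$ and $l_x(y)-l(y)\le\tau\|y-x\|^2$ for all $y$, and such that $f_x:=l_x+r$ is $\rho$-weakly convex (i.e. $f_x+\frac\rho2\|\cdot\|^2$ is convex). $\mathrm{prox}_{\mu f}(x)=\operatorname{argmin}_y\{f(y)+\frac1{2\mu}\|y-x\|^2\}$. *)

(* R : realType, R^d rendered as row vectors 'rV[R]_d,
   R ∪ {+oo}-valued functions rendered as \bar R-valued functions that never take -oo. *)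
From HB Require Import structures.
From mathcomp Require Import all_boot all_order all_algebra.
From mathcomp Require Import all_classical all_reals.
Set Implicit Arguments. Unset Strict Implicit. Unset Printing Implicit Defensive.
Import Order.TTheory GRing.Theory Num.Theory.
Local Open Scope ring_scope.
Local Open Scope ereal_scope.

Section Defs.
Variables (R : realType) (d : nat).
Local Notation V := 'rV[R]_d.

Definition edot (u v : V) : R := (\sum_(i < d) u ord0 i * v ord0 i)%R.
Definition enorm (u : V) : R := Num.sqrt (edot u u).

Definition edom (g : V -> \bar R) : set V := [set x | g x < +oo].

Definition never_minfty (g : V -> \bar R) : Prop := forall x, -oo < g x.

Definition proper_fun (g : V -> \bar R) : Prop :=
  never_minfty g /\ exists x, g x < +oo.

Definition closed_fun (g : V -> \bar R) : Prop :=
  forall (alpha : R) (x : V),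
    (forall eps : R, (0 < eps)%R ->
       exists y : V, (enorm (y - x) < eps)%R /\ g y <= alpha%:E) ->
    g x <= alpha%:E.

Definition econvex (g : V -> \bar R) : Prop :=
  forall (x y : V) (t : R), (0 <= t <= 1)%R ->
    g (t *: x + (1 - t) *: y)%R <= t%:E * g x + (1 - t)%:E * g y.

Definition weakly_convex (rho : R) (g : V -> \bar R) : Prop :=
  econvex (fun z => g z + (rho / 2 * enorm z ^+ 2)%:E).

Definition locally_lipschitz (l : V -> R) : Prop :=
  forall x : V, exists delta C : R, (0 < delta)%R /\
    forall y z, (enorm (y - x) < delta)%R -> (enorm (z - x) < delta)%R ->
      (`|l y - l z| <= C * enorm (y - z))%R.

Definition lipschitz_on (L : R) (S : set V) (h : V -> R) : Prop :=
  forall y z, S y -> S z -> (`|h y - h z| <= L * enorm (y - z))%R.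

Definition addfe (l : V -> R) (r : V -> \bar R) : V -> \bar R :=
  fun y => (l y)%:E + r y.

(* One-sided model family {f_x = lm x + r} for f = l + r with constants
   tau, L, rho (lm x y stands for l_x(y)) *)
Definition one_sided_model (l : V -> R) (r : V -> \bar R) (lm : V -> V -> R)
    (tau L rho : R) : Prop :=
  closed_fun r /\ locally_lipschitz l /\
  forall x : V,
    lipschitz_on L (edom r) (lm x) /\
    lm x x = l x /\
    (forall y, (lm x y - l y <= tau * enorm (y - x) ^+ 2)%R) /\
    weakly_convex rho (addfe (lm x) r).

Definition is_argmin (g : V -> \bar R) (y : V) : Prop :=
  forall z, g y <= g z.

Definition is_prox (mu : R) (f : V -> \bar R) (x p : V) : Prop :=
  is_argmin (fun y => f y + (1 / (2 * mu) * enorm (y - x) ^+ 2)%:E) p.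

End Defs.

(* Notation: phi = f + ||. - x0||^2/(2 mu) is the prox objective, p its minimiser,
   alpha = 1/mu - rho > 0, D_k = ||x_k - p||^2 and c = 16 L^2 / alpha^2.

   A minimiser ys of g + q ||. - c0||^2, with g rho-weakly convex,
      satisfies the quadratic growth bound
        g ys + q ||ys - c0||^2 + (q - rho/2) ||z - ys||^2 <= g z + q ||z - c0||^2
      (compare ys with the points of the segment [ys, z] and let them tend to ys).
   2. One iteration.  Growth of the k-th subproblem at z = p plus growth of phi at
      z = x_{k+1} give a descent inequality for D_{k+1}, whose error term (the gap of
      the one-sided model) is at most 2 L times a step length because tau = 0.
      Absorbing this error yields D_1 <= D_0/4 + c/4 and, for k >= 1,
        (k + 5) D_{k+1} <= (k + 1) D_k + c/(k + 1).
   3. Arithmetic.  By induction D_j <= 6 D_0/((j+1)(j+2)(j+3)) + c/(2(j+1)); with the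
      weights j + 1 these bounds telescope, Jensen's inequality transfers the weighted
      sum to the average xbar, and the lower bound on K gives the claimed accuracy. *)

From HB Require Import structures.
From mathcomp Require Import all_boot all_order all_algebra.
From mathcomp Require Import all_classical all_reals.
From mathcomp Require Import ring lra.
Set Implicit Arguments. Unset Strict Implicit. Unset Printing Implicit Defensive.
Import Order.TTheory GRing.Theory Num.Theory.
Local Open Scope ring_scope.

Section ScalarFacts.
Variable R : realType.

Lemma mu_rho_lt1 (rho mu : R) : 0 < rho -> mu < rho^-1 -> mu * rho < 1.
Proof. by move=> rho0; rewrite -(mulVf (lt0r_neq0 rho0)) ltr_pM2r. Qed.

Lemma alpha_gt0 (rho mu : R) : 0 < mu -> mu * rho < 1 -> 0 < mu^-1 - rho.
Proof.
move=> mu0 mr.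
have -> : mu^-1 - rho = (1 - mu * rho) / mu by field; rewrite gt_eqF.
by apply: divr_gt0 => //; lra.
Qed.

Lemma le_of_shrinking (P X : R) :
  (forall t, 0 < t -> t < 1 -> (1 - t) * P <= X) -> P <= X.
Proof.
move=> shrink; have half := shrink (1 / 2) ltac:(lra) ltac:(lra).
have [P0|P0] := lerP P 0; first lra.
rewrite leNgt; apply/negP => XP.
have t0 : 0 < (P - X) / (2 * P) by apply: divr_gt0; lra.
have t1 : (P - X) / (2 * P) < 1 by rewrite ltr_pdivrMr; lra.
have := shrink _ t0 t1.
have -> : (1 - (P - X) / (2 * P)) * P = (P + X) / 2 by field; rewrite gt_eqF.
lra.
Qed.

(* Young's inequality in the form used to absorb the model error 2 L s. *)
Lemma young_linear (t L s : R) : 0 < t ->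
  2 * L * s <= t / 2 * s ^+ 2 + 2 * L ^+ 2 / t.
Proof.
move=> t0; have : 0 <= t / 2 * (s - 2 * L / t) ^+ 2.
  by apply: mulr_ge0; [lra | apply: sqr_ge0].
have -> : t / 2 * (s - 2 * L / t) ^+ 2 = t / 2 * s ^+ 2 + 2 * L ^+ 2 / t - 2 * L * s.
  by field; rewrite gt_eqF.
lra.
Qed.

Lemma weighted_cauchy_schwarz (s : seq nat) (w a : nat -> R) :
  (forall k, 0 <= w k) -> 0 < \sum_(k <- s) w k ->
  (\sum_(k <- s) w k * a k) ^+ 2 <=
  (\sum_(k <- s) w k) * \sum_(k <- s) w k * a k ^+ 2.
Proof.
move=> w0 W0.
set W := \sum_(k <- s) w k; set A := \sum_(k <- s) w k * a k.
set B := \sum_(k <- s) w k * a k ^+ 2; pose m := A / W.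
have var_ge0 : 0 <= \sum_(k <- s) w k * (a k - m) ^+ 2.
  by apply: sumr_ge0 => k _; apply: mulr_ge0 => //; apply: sqr_ge0.
rewrite (eq_bigr (fun k => w k * a k ^+ 2 - 2 * m * (w k * a k) + m ^+ 2 * w k))
  in var_ge0; last by move=> k _; ring.
rewrite big_split sumrB /= -!mulr_sumr -/A -/B -/W in var_ge0.
have E : W * (B - 2 * m * A + m ^+ 2 * W) = W * B - A ^+ 2.
  by rewrite /m; field; rewrite gt_eqF.
by have := mulr_ge0 (ltW W0) var_ge0; rewrite E subr_ge0.
Qed.

End ScalarFacts.

Section Euclidean.
Variables (R : realType) (d : nat).
Local Notation V := 'rV[R]_d.

Lemma edot_ge0 (u : V) : 0 <= edot u u.
Proof. by apply: sumr_ge0 => i _; rewrite -expr2 sqr_ge0. Qed.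

Lemma enorm_sq (u : V) : enorm u ^+ 2 = edot u u.
Proof. by rewrite /enorm sqr_sqrtr // edot_ge0. Qed.

Lemma enorm_ge0 (u : V) : 0 <= enorm u.
Proof. exact: sqrtr_ge0. Qed.

Lemma edotBC (y z : V) : edot (y - z) (y - z) = edot (z - y) (z - y).
Proof. by apply: eq_bigr => i _; rewrite !mxE; ring. Qed.

Lemma enormBC (y z : V) : enorm (y - z) = enorm (z - y).
Proof. by rewrite /enorm edotBC. Qed.

Lemma edot_convex_comb (t : R) (z y c : V) :
  edot (t *: z + (1 - t) *: y - c) (t *: z + (1 - t) *: y - c) =
  t * edot (z - c) (z - c) + (1 - t) * edot (y - c) (y - c)
  - t * (1 - t) * edot (z - y) (z - y).
Proof.
rewrite /edot !mulr_sumr -!big_split /= -sumrB; apply: eq_bigr => i _.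
by rewrite !mxE; ring.
Qed.

Lemma edot_shifted_center (m s : R) (y x0 xk : V) : m != 0 -> 1 + s != 0 ->
  (1 + s) / (2 * m) * edot (y - (1 + s)^-1 *: (x0 + s *: xk))
                         (y - (1 + s)^-1 *: (x0 + s *: xk)) =
  1 / (2 * m) * edot (y - x0) (y - x0) + s / (2 * m) * edot (y - xk) (y - xk)
  - s / (2 * m * (1 + s)) * edot (x0 - xk) (x0 - xk).
Proof.
move=> m0 s0; rewrite /edot !mulr_sumr -!big_split /= -sumrB.
by apply: eq_bigr => i _; rewrite !mxE; field; rewrite s0 m0.
Qed.

Lemma average_dist_sq (s : seq nat) (w : nat -> R) (v : nat -> V) (p : V) :
  (forall k, 0 <= w k) -> 0 < \sum_(k <- s) w k ->
  edot ((\sum_(k <- s) w k)^-1 *: \sum_(k <- s) w k *: v k - p)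
       ((\sum_(k <- s) w k)^-1 *: \sum_(k <- s) w k *: v k - p) <=
  (\sum_(k <- s) w k)^-1 * \sum_(k <- s) w k * edot (v k - p) (v k - p).
Proof.
move=> w0 W0; set W := \sum_(k <- s) w k.
have Wn : W != 0 by rewrite gt_eqF.
have coord i : (W^-1 *: \sum_(k <- s) w k *: v k - p) ord0 i =
    W^-1 * \sum_(k <- s) w k * (v k ord0 i - p ord0 i).
  rewrite !mxE summxE.
  rewrite [in RHS](eq_bigr (fun k => w k * v k ord0 i - w k * p ord0 i));
    last by move=> k _; rewrite mulrBr.
  rewrite sumrB -mulr_suml -/W mulrBr mulrA mulVf // mul1r.
  by congr (_ * _ - _); apply: eq_bigr => k _; rewrite !mxE.
rewrite /edot; under eq_bigr => i _ do rewrite coord.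
rewrite [X in _ <= X](_ : _ = \sum_(i < d) W^-1 *
    \sum_(k <- s) w k * (v k ord0 i - p ord0 i) ^+ 2); last first.
  rewrite -mulr_sumr; congr (_ * _); rewrite exchange_big /=.
  by apply: eq_bigr => k _; rewrite mulr_sumr; apply: eq_bigr => i _; rewrite !mxE expr2.
apply: ler_sum => i _; rewrite -expr2 exprMn.
have CS := weighted_cauchy_schwarz (fun k => v k ord0 i - p ord0 i) w0 W0.
have Wi : 0 < W^-1 by rewrite invr_gt0.
rewrite expr2 -mulrA ler_pM2l // -(ler_pM2l W0) mulrA mulfV // mul1r.
exact: CS.
Qed.

(* Quadratic growth at the minimiser ys of g + q ||. - c||^2 for rho-weakly convex g:
   comparing ys with the points of the segment [ys, z] and letting them tend to ys. *)
Lemma argmin_quadratic_growth (g : V -> \bar R) (rho q : R) (c ys z : V) :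
  never_minfty g -> weakly_convex rho g ->
  is_argmin (fun y => g y + (q * enorm (y - c) ^+ 2)%:E)%E ys ->
  (g z < +oo)%E ->
  (g ys < +oo)%E /\
  fine (g ys) + q * edot (ys - c) (ys - c) + (q - rho / 2) * edot (z - ys) (z - ys)
   <= fine (g z) + q * edot (z - c) (z - c).
Proof.
move=> gfin wc am gz.
have [gzr Egz] : exists v, g z = v%:E.
  by case: (g z) gz (gfin z) => [v| |] //; exists v.
have [gyr Egy] : exists v, g ys = v%:E.
  have := am z; rewrite Egz -EFinD.
  by case: (g ys) (gfin ys) => [v| |] //= _; exists v.
rewrite Egy ltry; split => //; rewrite Egz /=.
set Z := edot (z - c) (z - c); set Y := edot (ys - c) (ys - c).
set W := edot (z - ys) (z - ys).
suff : (q - rho / 2) * W <= (gzr + q * Z) - (gyr + q * Y) by lra.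
apply: le_of_shrinking => t t0 t1; set zt := t *: z + (1 - t) *: ys.
have [gzt Egt] : exists v, g zt = v%:E.
  have := wc z ys t ltac:(apply/andP; split; lra).
  rewrite /= Egz Egy -!EFinD.
  by case: (g zt) (gfin zt) => [v| |] //= _; exists v.
have := wc z ys t ltac:(apply/andP; split; lra).
rewrite /= -/zt Egt Egz Egy -!EFinD lee_fin => convex_ineq.
have := am zt; rewrite /= Egt Egy -!EFinD lee_fin => min_ineq.
have := edot_convex_comb t z ys 0; rewrite !subr0 => sq_zt.
rewrite !enorm_sq sq_zt in convex_ineq.
rewrite !enorm_sq edot_convex_comb -/Z -/Y -/W in min_ineq.
rewrite -/W in convex_ineq.
(* t times the growth deficit at zt splits into the defect of weak convexity
   along [ys, z] plus the defect of minimality of ys against zt. *)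
have : 0 <= t * ((gzr + q * Z) - (gyr + q * Y + (q - rho / 2) * ((1 - t) * W))).
  set Z0 := edot z z in convex_ineq *; set Y0 := edot ys ys in convex_ineq *.
  have -> : t * ((gzr + q * Z) - (gyr + q * Y + (q - rho / 2) * ((1 - t) * W))) =
    (t * (gzr + rho / 2 * Z0) + (1 - t) * (gyr + rho / 2 * Y0) -
      (gzt + rho / 2 * (t * Z0 + (1 - t) * Y0 - t * (1 - t) * W))) +
    ((gzt + q * (t * Z + (1 - t) * Y - t * (1 - t) * W)) - (gyr + q * Y)) by ring.
  by apply: addr_ge0; rewrite subr_ge0.
rewrite (pmulr_rge0 _ t0) subr_ge0 mulrCA; lra.
Qed.

End Euclidean.

Section RateArithmetic.
Variable R : realType.

(* The rate proved for D_j = ||x_j - p||^2, as a function of a real index t. *)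
Definition rate_bound (D0 c t : R) : R :=
  6 * D0 / ((t + 1) * (t + 2) * (t + 3)) + c / (2 * (t + 1)).

(* First iteration: the descent inequality with error 2 L s, s^2 = D1, gives the
   rate at index 1 once the error is absorbed by Young's inequality. *)
Lemma first_step_rate (al L s D1 D0 : R) : 0 < al -> D1 = s ^+ 2 ->
  (2 * al + al / 2) / 2 * D1 <= al / 4 * D0 + 2 * L * s ->
  D1 <= rate_bound D0 (16 * L ^+ 2 / al ^+ 2) 1.
Proof.
move=> al0 -> descent.
have hal : 0 < al / 2 by lra.
have young := young_linear L s hal.
rewrite -(ler_pM2l al0).
have -> : al * rate_bound D0 (16 * L ^+ 2 / al ^+ 2) 1 =
          al / 4 * D0 + 2 * L ^+ 2 / (al / 2).
  by rewrite /rate_bound; field; rewrite gt_eqF.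
lra.
Qed.

(* Later iterations (theta = alpha (N + 1) / 2): the error 2 L s is absorbed by the
   step term theta/2 s^2, leaving a one-step recurrence for D. *)
Lemma recurrence_step (al L N s Dp Dk : R) : 0 < al -> 0 <= N ->
  let th := al / 2 * (N + 1) in
  (2 * al + th) / 2 * Dp + th / 2 * s ^+ 2 <= th / 2 * Dk + 2 * L * s ->
  (N + 5) * Dp <= (N + 1) * Dk + (16 * L ^+ 2 / al ^+ 2) / (N + 1).
Proof.
move=> al0 N0 th descent.
have th0 : 0 < th by rewrite /th; apply: mulr_gt0; lra.
have young := young_linear L s th0.
have absorbed : (2 * al + th) / 2 * Dp <= th / 2 * Dk + 2 * L ^+ 2 / th by lra.
have h4 : 0 < 4 / al by apply: divr_gt0; lra.
have := ler_wpM2l (ltW h4) absorbed.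
have -> : 4 / al * ((2 * al + th) / 2 * Dp) = (N + 5) * Dp.
  by rewrite /th; field; rewrite gt_eqF.
have -> // : 4 / al * (th / 2 * Dk + 2 * L ^+ 2 / th) =
   (N + 1) * Dk + (16 * L ^+ 2 / al ^+ 2) / (N + 1).
by rewrite /th; field; rewrite (gt_eqF al0) gt_eqF //; lra.
Qed.

Lemma rate_step (c D0 n X Y : R) : 1 <= n -> 0 <= c -> 0 <= D0 ->
  (n + 5) * X <= (n + 1) * Y + c / (n + 1) -> Y <= rate_bound D0 c n ->
  X <= rate_bound D0 c (n + 1).
Proof.
move=> n1 c0 D00 HX HY; rewrite /rate_bound in HY *.
have p1 : 0 < n + 1 by lra.
have p5 : 0 < n + 5 by lra.
have HY' : (n + 1) * Y <= 6 * D0 / ((n + 2) * (n + 3)) + c / 2.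
  have -> : 6 * D0 / ((n + 2) * (n + 3)) + c / 2 =
    (n + 1) * (6 * D0 / ((n + 1) * (n + 2) * (n + 3)) + c / (2 * (n + 1))).
    by field; rewrite !gt_eqF //; lra.
  by rewrite ler_pM2l.
set B := 6 * D0 / ((n + 1 + 1) * (n + 1 + 2) * (n + 1 + 3)) + c / (2 * (n + 1 + 1)).
have E : (n + 5) * B - (6 * D0 / ((n + 2) * (n + 3)) + c / 2 + c / (n + 1)) =
   6 * D0 / ((n + 2) * (n + 3) * (n + 4)) + c * (n - 1) / (2 * (n + 1) * (n + 2)).
  by rewrite /B; field; rewrite !gt_eqF //; lra.
have G : 0 <= 6 * D0 / ((n + 2) * (n + 3) * (n + 4)) +
              c * (n - 1) / (2 * (n + 1) * (n + 2)).
  by apply: addr_ge0; apply: divr_ge0; rewrite ?mulr_ge0 //; lra.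
rewrite -(ler_pM2l p5); lra.
Qed.

Lemma recurrence_rate (D : nat -> R) (c D0 : R) (M : nat) : 0 <= c -> 0 <= D0 ->
  D 1%N <= rate_bound D0 c 1 ->
  (forall n, (1 <= n < M)%N ->
     (n%:R + 5) * D n.+1 <= (n%:R + 1) * D n + c / (n%:R + 1)) ->
  forall j, (1 <= j <= M)%N -> D j <= rate_bound D0 c j%:R.
Proof.
move=> c0 D00 rate1 recur; elim=> [|[|j] IH] // /andP[_ hj].
rewrite -natr1; apply: rate_step (recur j.+1 _) (IH _) => //.
  by rewrite ler1n.
exact: ltnW.
Qed.

(* With the weights j + 1 the rate bounds telescope. *)
Lemma weighted_rate_sum (D0 c : R) (n : nat) :
  \sum_(1 <= j < n.+1) j.+1%:R * rate_bound D0 c j%:R =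
  (2 - 6 / (n%:R + 3)) * D0 + c * n%:R / 2.
Proof.
elim: n => [|n IH].
  by rewrite big_geq //; field.
rewrite big_nat_recr //= IH /rate_bound -!natr1.
have N0 : 0 <= n%:R :> R by [].
by field; rewrite !gt_eqF //; lra.
Qed.

Lemma weight_sum (n : nat) :
  \sum_(1 <= k < n.+2) k.+1%:R = (n%:R + 1) * (n%:R + 4) / 2 :> R.
Proof.
elim: n => [|n IH]; first by rewrite big_nat1; field.
by rewrite big_nat_recr //= IH -!natr1; field.
Qed.

Lemma average_weight_inv (K : nat) :
  2 / ((K.+2 * K.+3)%:R - 2) = (\sum_(1 <= k < K.+2) k.+1%:R)^-1 :> R.
Proof.
have -> : (K.+2 * K.+3)%:R - 2 = (K%:R + 1) * (K%:R + 4) :> R.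
  by rewrite natrM -!natr1; ring.
by rewrite weight_sum invf_div.
Qed.

Lemma final_estimate (N a b mu rho L e0 X : R) :
  0 < a -> 0 < b -> 0 < mu -> mu * rho < 1 -> 0 <= N -> 0 <= e0 ->
  4 / a + 16 * L ^+ 2 / ((1 - mu * rho) ^+ 2 * b ^+ 2) <= N ->
  X <= ((N + 1) * (N + 4) / 2)^-1 *
       (2 * e0 ^+ 2 + 16 * L ^+ 2 / (mu^-1 - rho) ^+ 2 * (N + 1) / 2) ->
  X <= (a * e0 + mu * b) ^+ 2.
Proof.
move=> a0 b0 mu0 mr N0 e00 hK HX.
have q0 : 0 < (1 - mu * rho) ^+ 2 * b ^+ 2 by apply: mulr_gt0; apply: exprn_gt0; lra.
have t1 : 0 <= 16 * L ^+ 2 / ((1 - mu * rho) ^+ 2 * b ^+ 2).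
  by apply: divr_ge0; [apply: mulr_ge0 => //; apply: sqr_ge0 | lra].
have a4 : 0 <= 4 / a by apply: divr_ge0; lra.
have aN : 4 <= a * N by rewrite mulrC -ler_pdivrMr //; lra.
have LN : 16 * L ^+ 2 <= N * ((1 - mu * rho) ^+ 2 * b ^+ 2).
  by rewrite -ler_pdivrMr //; lra.
have al_eq : mu^-1 - rho = (1 - mu * rho) / mu by field; rewrite gt_eqF.
have E : ((N + 1) * (N + 4) / 2)^-1 *
       (2 * e0 ^+ 2 + 16 * L ^+ 2 / ((1 - mu * rho) / mu) ^+ 2 * (N + 1) / 2) =
       4 / ((N + 1) * (N + 4)) * e0 ^+ 2 +
       (16 * L ^+ 2 * mu ^+ 2 / (1 - mu * rho) ^+ 2) / (N + 4).
  by field; rewrite !gt_eqF //; lra.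
have i1 : 4 / ((N + 1) * (N + 4)) * e0 ^+ 2 <= a ^+ 2 * e0 ^+ 2.
  apply: ler_wpM2r; first exact: sqr_ge0.
  by rewrite ler_pdivrMr; [nra | apply: mulr_gt0; lra].
have i2 : (16 * L ^+ 2 * mu ^+ 2 / (1 - mu * rho) ^+ 2) / (N + 4) <= (mu * b) ^+ 2.
  rewrite ler_pdivrMr; last lra.
  rewrite ler_pdivrMr; last by apply: exprn_gt0; lra.
  have : 0 <= mu ^+ 2 by apply: sqr_ge0.
  nra.
have i3 : 0 <= a * e0 * (mu * b) by rewrite !mulr_ge0 //; lra.
rewrite al_eq E in HX; rewrite sqrrD exprMn; lra.
Qed.

End RateArithmetic.

Section ProximalIterates.
Variables (R : realType) (d : nat).
Local Notation V := 'rV[R]_d.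
Variables (l : V -> R) (r : V -> \bar R) (lm : V -> V -> R) (L rho mu : R).
Variables (x0 : V) (K : nat) (x : nat -> V) (p : V).

Local Notation alpha := (mu^-1 - rho).
Local Notation c_err := (16 * L ^+ 2 / alpha ^+ 2).
Local Notation D k := (edot (x k - p) (x k - p)).
Local Notation in_dom y := (r y < +oo)%E.
Local Notation theta k := (alpha / 2 * k.+1%:R).

Hypothesis r_proper : proper_fun r.
Hypothesis f_wconvex : weakly_convex rho (addfe l r).
Hypothesis model : one_sided_model l r lm 0 L rho.
Hypothesis mu_gt0 : 0 < mu.
Hypothesis mu_rho : mu * rho < 1.
Hypothesis x_step : forall k : nat, (k <= K)%N ->
  let theta := (mu^-1 - rho) / 2 * (k.+1)%:R in
  is_argmin (fun y => (addfe (lm (x k)) r y +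
     ((1 + theta * mu) / (2 * mu) *
       enorm (y - (1 + theta * mu)^-1 *: (x0 + (theta * mu) *: x k)) ^+ 2)%:E)%E)
    (x k.+1).
Hypothesis p_prox : is_prox mu (addfe l r) x0 p.

Lemma addfe_gt_ninfty (h : V -> R) (y : V) : (-oo < addfe h r y)%E.
Proof. by rewrite /addfe; case: (r y) (r_proper.1 y) => //= v _; rewrite ltNyr. Qed.

Lemma addfe_lt_pinfty (h : V -> R) (y : V) : (addfe h r y < +oo)%E = in_dom y.
Proof. by rewrite /addfe; case: (r y) => [v| |] /=; rewrite ?ltry ?ltey ?ltNye. Qed.

Lemma fine_addfe (h : V -> R) (y : V) : in_dom y -> fine (addfe h r y) = h y + fine (r y).
Proof. by rewrite /addfe; case: (r y) (r_proper.1 y). Qed.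

Lemma model_exact (y : V) : lm y y = l y.
Proof. exact: (model.2.2 y).2.1. Qed.

Lemma model_below (y z : V) : lm y z <= l z.
Proof. by have := (model.2.2 y).2.2.1 z; rewrite mul0r subr_le0. Qed.

Lemma model_lipschitz (y z w : V) : in_dom z -> in_dom w ->
  lm y z - lm y w <= L * enorm (z - w).
Proof. by move=> hz hw; apply: le_trans (ler_norm _) ((model.2.2 y).1 z w hz hw). Qed.

Lemma model_weakly_convex (y : V) : weakly_convex rho (addfe (lm y) r).
Proof. exact: (model.2.2 y).2.2.2. Qed.

Lemma model_gap_step (y w q : V) : in_dom y -> in_dom w ->
  (l w - lm y w) - (l q - lm y q) <= 2 * L * enorm (w - y).
Proof.
move=> hy hw.
have lip_w := model_lipschitz w hw hy; rewrite model_exact in lip_w.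
have below_w := model_below w y.
have lip_y := model_lipschitz y hy hw; rewrite model_exact enormBC in lip_y.
have below_q := model_below y q.
lra.
Qed.

Lemma model_gap_anchor (y w q : V) : in_dom w -> in_dom q ->
  (l w - lm y w) - (l q - lm y q) <= 2 * L * enorm (w - q).
Proof.
move=> hw hq.
have lip_w := model_lipschitz w hw hq; rewrite model_exact in lip_w.
have below_w := model_below w q.
have lip_y := model_lipschitz y hq hw; rewrite enormBC in lip_y.
lra.
Qed.

Lemma prox_in_dom : in_dom p.
Proof.
have [z hz] := r_proper.2.
have fz : (addfe l r z < +oo)%E by rewrite addfe_lt_pinfty.
have [hp _] := argmin_quadratic_growth (addfe_gt_ninfty l) f_wconvex p_prox fz.
by rewrite addfe_lt_pinfty in hp.
Qed.

Lemma prox_growth (z : V) : in_dom z ->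
  l p + fine (r p) + 1 / (2 * mu) * edot (p - x0) (p - x0)
      + alpha / 2 * edot (z - p) (z - p)
  <= l z + fine (r z) + 1 / (2 * mu) * edot (z - x0) (z - x0).
Proof.
move=> hz; have fz : (addfe l r z < +oo)%E by rewrite addfe_lt_pinfty.
have [_ growth] := argmin_quadratic_growth (addfe_gt_ninfty l) f_wconvex p_prox fz.
rewrite (fine_addfe _ hz) (fine_addfe _ prox_in_dom) in growth.
have -> : alpha / 2 = 1 / (2 * mu) - rho / 2 by field; rewrite gt_eqF.
exact: growth.
Qed.

(* Each iterate lies in the domain of r, being compared with p in the domain. *)
Lemma iterate_in_dom (k : nat) : (k <= K)%N -> in_dom (x k.+1).
Proof.
move=> hk; have := x_step hk; cbv zeta => argmin_k.
have fp : (addfe (lm (x k)) r p < +oo)%E by rewrite addfe_lt_pinfty prox_in_dom.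
have [h _] := argmin_quadratic_growth (addfe_gt_ninfty _) (model_weakly_convex _)
                argmin_k fp.
by rewrite addfe_lt_pinfty in h.
Qed.

(* One iteration: quadratic growth of the k-th subproblem (compared with p) plus
   quadratic growth of the prox objective (compared with x_{k+1}). *)
Lemma iterate_descent (k : nat) : (k <= K)%N ->
  (2 * alpha + theta k) / 2 * D k.+1
      + theta k / 2 * edot (x k.+1 - x k) (x k.+1 - x k)
  <= theta k / 2 * D k + ((l (x k.+1) - lm (x k) (x k.+1)) - (l p - lm (x k) p)).
Proof.
move=> hk; have := x_step hk; cbv zeta => argmin_k.
have fp : (addfe (lm (x k)) r p < +oo)%E by rewrite addfe_lt_pinfty prox_in_dom.
have [_ growth] := argmin_quadratic_growth (addfe_gt_ninfty _) (model_weakly_convex _)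
                     argmin_k fp.
have dom_next := iterate_in_dom hk.
have prox_ineq := prox_growth dom_next.
have theta_gt0 : 0 < theta k.
  by apply: mulr_gt0; [apply: divr_gt0 => //; exact: alpha_gt0 | exact: ltr0Sn].
have s_gt0 : 0 < 1 + theta k * mu by have := mulr_gt0 theta_gt0 mu_gt0; lra.
rewrite (fine_addfe _ dom_next) (fine_addfe _ prox_in_dom) in growth.
rewrite !edot_shifted_center ?gt_eqF // in growth.
have e1 : theta k * mu / (2 * mu) = theta k / 2 by field; rewrite gt_eqF.
have e2 : (1 + theta k * mu) / (2 * mu) - rho / 2 = (alpha + theta k) / 2.
  by field; rewrite gt_eqF.
rewrite e1 e2 (edotBC p (x k.+1)) (edotBC p (x k)) in growth.
lra.
Qed.

(* The rate at index 1: here the model gap is measured against p itself. *)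
Lemma first_distance : D 1%N <= rate_bound (D 0%N) c_err 1.
Proof.
have desc := iterate_descent (leq0n K).
have gap := model_gap_anchor (x 0%N) (iterate_in_dom (leq0n K)) prox_in_dom.
have al0 := alpha_gt0 mu_gt0 mu_rho.
have step_ge0 : 0 <= alpha / 2 / 2 * edot (x 1%N - x 0%N) (x 1%N - x 0%N).
  by apply: mulr_ge0; [lra | exact: edot_ge0].
apply: (first_step_rate (L := L) (D0 := D 0%N) al0 (esym (enorm_sq _))).
rewrite mulr1n mulr1 in desc; lra.
Qed.

Lemma distance_recurrence (n : nat) : (1 <= n < K.+1)%N ->
  (n%:R + 5) * D n.+1 <= (n%:R + 1) * D n + c_err / (n%:R + 1).
Proof.
case: n => [//|n] /andP[_]; rewrite ltnS => hn.
have gap := model_gap_step p (iterate_in_dom (ltnW hn)) (iterate_in_dom hn).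
have desc := iterate_descent hn.
rewrite -(enorm_sq (x n.+2 - x n.+1)) -[n.+2%:R]natr1 in desc.
apply: (recurrence_step (s := enorm (x n.+2 - x n.+1)) (alpha_gt0 mu_gt0 mu_rho)).
  exact: ler0n.
lra.
Qed.

Lemma distance_rate (j : nat) : (1 <= j <= K.+1)%N -> D j <= rate_bound (D 0%N) c_err j%:R.
Proof.
have c_ge0 : 0 <= c_err.
  by apply: divr_ge0; [apply: mulr_ge0 => //; exact: sqr_ge0 | exact: sqr_ge0].
exact: (recurrence_rate (D := fun k => D k) c_ge0 (edot_ge0 _) first_distance
          distance_recurrence).
Qed.

Lemma weighted_distance_sum :
  \sum_(1 <= k < K.+2) k.+1%:R * D k <= 2 * D 0%N + c_err * (K%:R + 1) / 2.
Proof.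
apply: le_trans (_ : _ <= \sum_(1 <= k < K.+2) k.+1%:R * rate_bound (D 0%N) c_err k%:R) _.
  by apply: ler_sum_nat => k hk; rewrite ler_pM2l // distance_rate.
rewrite weighted_rate_sum -[K.+1%:R]natr1.
have K_ge0 : 0 <= K%:R :> R by exact: ler0n.
have : 0 <= 6 / (K%:R + 1 + 3) * D 0%N.
  by apply: mulr_ge0; [apply: divr_ge0 => //; lra | exact: edot_ge0].
lra.
Qed.

End ProximalIterates.

Local Open Scope ereal_scope.

Theorem mainTheorem8 (R : realType) (d : nat)
  (l : 'rV[R]_d -> R) (r : 'rV[R]_d -> \bar R) (lm : 'rV[R]_d -> 'rV[R]_d -> R)
  (L rho mu a b : R) (x0 : 'rV[R]_d) (K : nat)
  (x : nat -> 'rV[R]_d) (p : 'rV[R]_d) :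
  proper_fun r ->
  weakly_convex rho (addfe l r) ->
  one_sided_model l r lm 0 L rho ->
  (0 < rho)%R -> (0 < mu)%R -> (mu < rho^-1)%R ->
  (0 < a)%R -> (0 < b)%R ->
  x 0%N = x0 ->
  (forall k : nat, (k <= K)%N ->
     let theta := ((mu^-1 - rho) / 2 * (k.+1)%:R)%R in
     is_argmin (fun y => addfe (lm (x k)) r y +
        ((1 + theta * mu) / (2 * mu) *
          enorm (y - (1 + theta * mu)^-1 *: (x0 + (theta * mu) *: x k)) ^+ 2)%:E)
       (x k.+1)) ->
  is_prox mu (addfe l r) x0 p ->
  (4 / a + 16 * L ^+ 2 / ((1 - mu * rho) ^+ 2 * b ^+ 2) <= K%:R)%R ->
  let xbar := ((2 / ((K.+2 * K.+3)%:R - 2)) *: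
                 \sum_(1 <= k < K.+2) (k.+1)%:R *: x k)%R in
  (enorm (xbar - p) <= a * enorm (x0 - p) + mu * b)%R.
Proof.
move=> r_proper f_wconvex model rho_gt0 mu_gt0 mu_lt a_gt0 b_gt0 x_init x_step
  p_prox K_large; cbv zeta; set xbar := (2 / _ *: _)%R.
have mu_rho := mu_rho_lt1 rho_gt0 mu_lt.
have K_ge0 : (0 <= K%:R :> R)%R by exact: ler0n.
have W_gt0 : (0 < \sum_(1 <= k < K.+2) k.+1%:R :> R)%R.
  by rewrite weight_sum; apply: divr_gt0 => //; apply: mulr_gt0; lra.
have sums := weighted_distance_sum r_proper f_wconvex model mu_gt0 mu_rho x_step p_prox.
have sq_bound : (enorm (xbar - p) ^+ 2 <= (a * enorm (x0 - p) + mu * b) ^+ 2)%R.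
  apply: (final_estimate a_gt0 b_gt0 mu_gt0 mu_rho K_ge0 (enorm_ge0 _) K_large).
  rewrite /xbar average_weight_inv enorm_sq.
  apply: le_trans (average_dist_sq x p (fun k => ler0n _ _) W_gt0) _.
  rewrite weight_sum enorm_sq -x_init ler_pM2l ?invr_gt0 //.
  by apply: divr_gt0 => //; apply: mulr_gt0; lra.
have rhs_ge0 : (0 <= a * enorm (x0 - p) + mu * b)%R.
  by rewrite addr_ge0 ?mulr_ge0 ?enorm_ge0 //; apply: ltW.
by rewrite -(@ler_pXn2r _ 2) // ?nnegrE ?enorm_ge0.
Qed.
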